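(* Let $p$ be such that $p^*=\frac{p}{p-1}>0$, let $\alpha\in\mathbb{R}\setminus[1,2]$, and let $x_0\in(0,\infty)$. Set $a=\frac{\alpha-1}{(\alpha-2)p^*}$, $$K=\frac{a_{p,1}}{p^*}|\alpha-2|^{\frac{1}{\alpha-2}},\qquad s_0=K\,\Gamma\big(a,x_0^{p^*}\big).$$ Then the up transform of $g_{p,1}$, computed with the change of variable $s(x)=\int_x^{x_0}|(\alpha-2)v|^{\frac1{\alpha-2}}g_{p,1}(v)\,dv$, is $$\mathcal{U}_\alpha[g_{p,1}](s)=|\alpha-2|^{\frac{1}{2-\alpha}}\left|\Gamma^{-1}\!\left(a,\frac{s+s_0}{K}\right)\right|^{\frac{1}{p^*(2-\alpha)}}.$$
   Context: $g_{p,1}(x)=a_{p,1}e^{-x^{p^*}}$ for $x\in[0,\infty)$, with $a_{p,1}=\frac{p^*}{2\Gamma(1/p^* )}$ (the restriction to the half-line of the symmetric stretched Gaussian). $\Gamma(a,z)=\int_z^\infty w^{a-1}e^{-w}\,dw$ is the upper incomplete Gamma function and $\Gamma^{-1}(a,\cdot)$ denotes its inverse with respect to the second argument. Up transform: for $\alpha\ne2$, $\mathcal{U}_\alpha[f](s)=|(\alpha-2)x(s)|^{1/(2-\alpha)}$, where $x(s)$ is the inverse of the change of variable $s(x)$ (satisfying $s'(x)=-|(\alpha-2)x|^{1/(\alpha-2)}f(x)$). *)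

From mathcomp Require Import all_boot all_order all_algebra.
From mathcomp Require Import all_classical all_reals all_analysis.
Set Implicit Arguments. Unset Strict Implicit. Unset Printing Implicit Defensive.
Import Order.TTheory GRing.Theory Num.Theory.
Import numFieldNormedType.Exports.
Local Open Scope classical_set_scope.
Local Open Scope ring_scope.

Section Defs.
Variable R : realType.
Local Notation mu := (@lebesgue_measure R).

Definition pstar (p : R) : R := p / (p - 1).

Definition upper_gamma (a z : R) : R :=
  \int[mu]_(w in `[z, +oo[) (w `^ (a - 1) * expR (- w)).

Definition Gamma (a : R) : R := upper_gamma a 0.

Definition upper_gamma_inv (a y : R) : R :=
  xget 0 [set z | 0 <= z /\ upper_gamma a z = y].

Definition a_p1 (p : R) : R := pstar p / (2 * Gamma (1 / pstar p)).

(* g_{p,1}(x) = a_{p,1} e^{-x^{pstar}}, used for x in [0,∞) *)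
Definition g_p1 (p : R) (x : R) : R := a_p1 p * expR (- (x `^ pstar p)).

Definition oint (f : R -> R) (a b : R) : R :=
  if a <= b then \int[mu]_(t in `[a, b]) f t
  else - \int[mu]_(t in `[b, a]) f t.

Definition chvar (alpha : R) (f : R -> R) (x0 : R) (x : R) : R :=
  oint (fun v => `|(alpha - 2) * v| `^ (1 / (alpha - 2)) * f v) x x0.

Definition up_transform (alpha : R) (f : R -> R) (x0 : R) (s : R) : R :=
  `|(alpha - 2) * xget 0 [set x | 0 < x /\ chvar alpha f x0 x = s]| `^ (1 / (2 - alpha)).

End Defs.

From mathcomp Require Import all_boot all_order all_algebra.
From mathcomp Require Import all_classical all_reals all_analysis.
From mathcomp Require Import measurable_realfun ring lra.
Import Order.TTheory GRing.Theory Num.Theory.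
Import numFieldNormedType.Exports.
Local Open Scope classical_set_scope.
Local Open Scope ring_scope.

(* Substituting w = v^{p*} turns the integrand |(α-2)v|^{1/(α-2)} g_{p,1}(v)
   of the change of variable into K w^{a-1} e^{-w} dw, so that
   s(x) = K (Γ(a, x^{p*}) - Γ(a, x0^{p*})).  As α lies outside [1,2], a > 0:
   then w^{a-1} e^{-w} is integrable on [0,∞) (like w^{a-1} near 0 and like
   e^{-w/2} at infinity) and positive, so Γ(a,·) is finite and strictly
   decreasing on [0,∞).  Hence s is injective on (0,∞), its inverse is
   x(s)^{p*} = Γ^{-1}(a, (s + s0)/K), and the formula follows by plugging
   this into U_α[g_{p,1}](s) = |(α-2) x(s)|^{1/(2-α)}. *)

Section powR_facts.
Context {R : realType}.
Local Notation mu := (@lebesgue_measure R).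

Lemma continuous_powR (c x : R) : 0 < x -> {for x, continuous (@powR R ^~ c)}.
Proof.
move=> x_gt0; apply: differentiable_continuous; apply/derivable1_diffP.
by apply: derivable_powR; rewrite in_itv/= andbT.
Qed.

Lemma continuous_derive1_powR (c x : R) : 0 < x ->
  {for x, continuous (@powR R ^~ c)^`()%classic}.
Proof.
move=> x_gt0.
have derE : {near x, (fun y => c * y `^ (c - 1)) =1 (@powR R ^~ c)^`()%classic}.
  near=> y; rewrite powR_derive1 // in_itv/= andbT.
  near: y; exact: lt_nbhsr.
rewrite /prop_for /continuous_at -(nbhs_singleton derE).
apply: cvg_trans; first exact: near_eq_cvg derE.
apply: (@continuousM R R (fun=> c) (fun y => y `^ (c - 1)) x); first exact: cvg_cst.
exact: continuous_powR.
Unshelve. all: by end_near. Qed.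

Lemma powR_ge_min (c m v w : R) : 0 < m -> m <= w <= v ->
  Order.min (m `^ c) (v `^ c) <= w `^ c.
Proof.
move=> m_gt0 /andP[mw wv].
have w_gt0 : 0 < w := lt_le_trans m_gt0 mw.
have v_gt0 : 0 < v := lt_le_trans w_gt0 wv.
rewrite ge_min /powR !gt_eqF // !ler_expR.
have [c_ge0|c_lt0] := leP 0 c.
  by apply/orP; left; apply: ler_wpM2l; rewrite // ler_ln ?posrE.
by apply/orP; right; apply: ler_wnM2l; [exact: ltW | rewrite ler_ln ?posrE].
Qed.

(* [w/2k <= expR (w/2k)], raised to the power [k] *)
Lemma powR_le_expR_half (k w : R) : 0 < k -> 0 <= w ->
  w `^ k <= (2 * k) `^ k * expR (w / 2).
Proof.
move=> k_gt0 w_ge0.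
have k2_gt0 : 0 < 2 * k by rewrite mulr_gt0.
have y_ge0 : 0 <= w / (2 * k) by rewrite divr_ge0 // ltW.
have -> : w `^ k = (2 * k) `^ k * (w / (2 * k)) `^ k.
  by rewrite -powRM ?(ltW k2_gt0) // mulrC divfK // gt_eqF.
rewrite ler_wpM2l ?powR_ge0 //.
have -> : w / 2 = w / (2 * k) * k by field; rewrite gt_eqF.
rewrite expRM ge0_ler_powR ?nnegrE ?expR_ge0 ?(ltW k_gt0) //.
by rewrite (le_trans _ (expR_ge1Dx _)) // lerDr.
Qed.

Lemma itv_oc01_bigcup :
  `]0, 1]%classic = \bigcup_n `[n.+2%:R^-1, 1]%classic :> set R.
Proof.
apply/seteqP; split => [x|x [n _]]; rewrite /= !in_itv/=.
  move=> /andP[x_gt0 x_le1]; exists (Num.truncn x^-1) => //=.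
  rewrite in_itv/= x_le1 andbT invf_ple ?posrE ?ltr0n //.
  by rewrite (le_trans (ltW (truncnS_gt _))) // ler_nat.
by move=> /andP[n_le_x ->]; rewrite andbT (lt_le_trans _ n_le_x) // invr_gt0.
Qed.

Lemma integral_itv_powR_derive1 (b e : R) : 0 < e < 1 ->
  (\int[mu]_(w in `[e, 1%R]) (b * w `^ (b - 1))%:E = (1 - e `^ b)%:E)%E.
Proof.
move=> /andP[e_gt0 e_lt1].
rewrite (@continuous_FTC2 _ _ (@powR R ^~ b)) ?powR1 //.
- apply: continuous_in_subspaceT => x; rewrite inE/= in_itv/= => /andP[e_le_x _].
  apply: (@continuousM R R (fun=> b) (fun y => y `^ (b - 1)) x); first exact: cvg_cst.
  exact/continuous_powR/(lt_le_trans e_gt0).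
- split.
  + move=> x; rewrite in_itv/= => /andP[e_lt_x _]; apply: derivable_powR.
    by rewrite in_itv/= andbT (lt_trans e_gt0).
  + exact/cvg_at_right_filter/continuous_powR.
  + exact/cvg_at_left_filter/continuous_powR.
- move=> x; rewrite in_itv/= => /andP[e_lt_x _].
  by rewrite powR_derive1 // in_itv/= andbT (lt_trans e_gt0).
Qed.

Lemma integral_itv_oc01_powR_le1 (b : R) : 0 < b ->
  (\int[mu]_(w in `]0%R, 1%R]) (b * w `^ (b - 1))%:E <= 1)%E.
Proof.
move=> b_gt0.
pose F n : set R := `[n.+2%:R^-1, 1]%classic.
have nndF : nondecreasing_seq F.
  apply/nondecreasing_seqP => n; rewrite subsetEset => x.
  rewrite /F /= !in_itv/= => /andP[xm ->]; rewrite andbT.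
  by rewrite (le_trans _ xm) // lef_pV2 ?posrE ?ltr0n // ler_nat.
have mF n : measurable (F n) by exact: measurable_itv.
have mf n : measurable_fun (F n) (fun w => (b * w `^ (b - 1))%:E).
  apply/measurable_funTS/measurable_EFinP/measurable_funM.
    exact: measurable_cst.
  exact: measurable_powR.
have f_ge0 n x : F n x -> (0 <= (b * x `^ (b - 1))%:E)%E.
  by rewrite lee_fin mulr_ge0 ?powR_ge0 ?ltW.
have := @ge0_nondecreasing_set_cvg_integral _ _ _ _ _ lebesgue_measure nndF mF mf f_ge0.
rewrite -itv_oc01_bigcup => /cvg_lim <- //.
apply: lime_le.
  exact/ereal_nondecreasing_is_cvgn/ge0_nondecreasing_set_nondecreasing_integral.
near=> n; rewrite integral_itv_powR_derive1 ?lee_fin ?gerBl ?powR_ge0 //.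
by rewrite invr_gt0 ltr0n invf_lt1 ?ltr0n // ltr1n.
Unshelve. all: by end_near. Qed.

End powR_facts.

Lemma integrable_setU d (T : measurableType d) (R : realType)
    (mu : {measure set T -> \bar R}) (A B : set T) (f : T -> \bar R) :
  measurable A -> measurable B -> [disjoint A & B] ->
  mu.-integrable A f -> mu.-integrable B f -> mu.-integrable (A `|` B) f.
Proof.
move=> mA mB AB /integrableP[mfA fA] /integrableP[mfB fB].
have mfAB : measurable_fun (A `|` B) f by apply/measurable_funU.
apply/integrableP; split => //.
rewrite ge0_integral_setU //=; first exact: lte_add_pinfty.
exact: measurableT_comp.
Qed.

Section gamma_integrand.
Context {R : realType}.
Local Notation mu := (@lebesgue_measure R).

Definition gamma_integrand (a w : R) : R := w `^ (a - 1) * expR (- w).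

Lemma gamma_integrand_ge0 (a w : R) : 0 <= gamma_integrand a w.
Proof. by rewrite mulr_ge0 ?powR_ge0 ?expR_ge0. Qed.

Lemma measurable_gamma_integrand (a : R) : measurable_fun setT (gamma_integrand a).
Proof.
apply: measurable_funM; first exact: measurable_powR.
apply: continuous_measurable_fun => x.
by apply: continuous_comp; [exact: continuousN | exact: continuous_expR].
Qed.

Lemma continuous_gamma_integrand (a x : R) : 0 < x ->
  {for x, continuous (gamma_integrand a)}.
Proof.
move=> x_gt0; apply: continuousM; first exact: continuous_powR.
by apply: continuous_comp; [exact: continuousN | exact: continuous_expR].
Qed.

Lemma gamma_integrand_le_exponential (a k w : R) : a - 1 <= k -> 0 < k -> 1 <= w ->
  gamma_integrand a w <= 2 * (2 * k) `^ k * (2^-1 * expR (- 2^-1 * w)).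
Proof.
move=> a_le_k k_gt0 w_ge1.
have w_ge0 : 0 <= w := le_trans ler01 w_ge1.
have -> : 2 * (2 * k) `^ k * (2^-1 * expR (- 2^-1 * w)) =
    (2 * k) `^ k * expR (w / 2) * expR (- w).
  have -> : expR (- 2^-1 * w) = expR (w / 2) * expR (- w) :> R.
    by rewrite -expRD; congr expR; field.
  by field.
rewrite ler_wpM2r ?expR_ge0 // (le_trans (ler_powR w_ge1 a_le_k)) //.
exact: powR_le_expR_half.
Qed.

Lemma integrable_gamma_integrand_itv_cc01 (a : R) : 0 < a ->
  mu.-integrable `[0%R, 1%R] (EFin \o gamma_integrand a).
Proof.
move=> a_gt0.
have m_pow : measurable_fun setT (fun w : R => a * w `^ (a - 1)).
  by apply: measurable_funM; [exact: measurable_cst | exact: measurable_powR].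
have int_pow : mu.-integrable `[0%R, 1%R] (EFin \o fun w => a * w `^ (a - 1)).
  apply/integrableP; split; first exact/measurable_EFinP/measurable_funTS.
  under eq_integral => x _ do rewrite /= ger0_norm ?mulr_ge0 ?powR_ge0 ?ltW //.
  rewrite -integral_itv_obnd_cbnd; last exact/measurable_EFinP/measurable_funTS.
  by apply: le_lt_trans (integral_itv_oc01_powR_le1 _ a_gt0) _; exact: ltry.
apply: (@le_integrable _ _ _ lebesgue_measure _ (measurable_itv _) _ _ _ _
  (integrableZl _ a^-1 int_pow)) => //.
  by apply/measurable_funTS/measurable_EFinP; exact: measurable_gamma_integrand.
move=> x; rewrite /= in_itv/= => /andP[x_ge0 _].
rewrite lee_fin mulrA mulVf ?gt_eqF // mul1r !ger0_norm ?gamma_integrand_ge0 ?powR_ge0 //.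
by rewrite ler_piMr ?powR_ge0 // expR_le1 oppr_le0.
Qed.

Lemma integrable_gamma_integrand_itv_o1y (a : R) :
  mu.-integrable `]1%R, +oo[ (EFin \o gamma_integrand a).
Proof.
pose k := `|a - 1| + 1.
have k_gt0 : 0 < k by rewrite ltr_wpDl.
have a_le_k : a - 1 <= k by rewrite (le_trans (ler_norm _)) // lerDl.
have half_gt0 : 0 < 2^-1 :> R by rewrite invr_gt0.
apply: (@le_integrable _ _ _ lebesgue_measure _ (measurable_itv _) _ _ _ _
  (integrableZl _ (2 * (2 * k) `^ k)
    (integrableS _ _ (@subsetT _ _)
      (integrable_exponential_pdf half_gt0)))) => //.
- by apply/measurable_funTS/measurable_EFinP; exact: measurable_gamma_integrand.
- move=> x; rewrite /= in_itv/= andbT => x_gt1.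
  rewrite lee_fin exponential_pdfE ?(le_trans ler01 (ltW x_gt1)) //=.
  rewrite !ger0_norm ?gamma_integrand_ge0 ?mulr_ge0 ?powR_ge0 ?expR_ge0 //.
  exact: gamma_integrand_le_exponential (ltW x_gt1).
Qed.

Lemma integrable_gamma_integrand (a z : R) : 0 < a -> 0 <= z ->
  mu.-integrable `[z, +oo[ (EFin \o gamma_integrand a).
Proof.
move=> a_gt0 z_ge0.
apply: (@integrableS _ _ _ lebesgue_measure `[0%R, +oo[) => //.
  by move=> x /=; rewrite !in_itv/= !andbT; exact: le_trans.
rewrite (@itv_bndbnd_setU _ _ _ (BRight 1%R)) //.
apply: integrable_setU => //.
- apply/disj_set2P; rewrite -subset0 => x /= [].
  by rewrite !in_itv/= => /andP[_ x_le1] /andP[/(le_lt_trans x_le1)]; rewrite ltxx.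
- exact: integrable_gamma_integrand_itv_cc01.
- exact: integrable_gamma_integrand_itv_o1y.
- by rewrite bnd_simp.
Qed.

End gamma_integrand.

Section upper_gamma.
Context {R : realType}.
Local Notation mu := (@lebesgue_measure R).

Lemma upper_gammaE (a z : R) :
  upper_gamma a z = \int[mu]_(w in `[z, +oo[) gamma_integrand a w.
Proof. by []. Qed.

Lemma integral_gamma_integrand_gt0 (a u v : R) : 0 < a -> 0 <= u < v ->
  0 < \int[mu]_(w in `[u, v]) gamma_integrand a w.
Proof.
move=> a_gt0 /andP[u_ge0 u_lt_v].
pose m := (u + v) / 2.
have m_gt0 : 0 < m by rewrite /m; lra.
have m_lt_v : m < v by rewrite /m; lra.
have u_le_m : u <= m by rewrite /m; lra.
pose c := Order.min (m `^ (a - 1)) (v `^ (a - 1)) * expR (- v).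
have c_gt0 : 0 < c.
  by rewrite mulr_gt0 ?expR_gt0 // lt_min !powR_gt0 // (lt_trans m_gt0).
have int_uv : mu.-integrable `[u, v] (EFin \o gamma_integrand a).
  apply: (@integrableS _ _ _ lebesgue_measure `[u, +oo[) => //.
    by move=> x /=; rewrite !in_itv/= => /andP[-> _].
  exact: integrable_gamma_integrand.
have m_ga : measurable_fun setT (EFin \o gamma_integrand a).
  by apply/measurable_EFinP; exact: measurable_gamma_integrand.
have sub_mv : (\int[mu]_(w in `[m, v]) (gamma_integrand a w)%:E <=
    \int[mu]_(w in `[u, v]) (gamma_integrand a w)%:E)%E.
  apply: ge0_subset_integral => //; first exact: measurable_funTS.
    by move=> x _; rewrite lee_fin gamma_integrand_ge0.
  by move=> x /=; rewrite !in_itv/= => /andP[/(le_trans u_le_m) -> ->].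
have cst_mv : ((c * (v - m))%:E <=
    \int[mu]_(w in `[m, v]) (gamma_integrand a w)%:E)%E.
  have -> : (c * (v - m))%:E = (\int[mu]_(w in `[m, v]) (cst c%:E) w)%E.
    by rewrite integral_cst //= lebesgue_measure_itv /= lte_fin m_lt_v -EFinB.
  apply: ge0_le_integral => //; first by move=> x _; rewrite lee_fin ltW.
    exact: measurable_funTS.
  move=> x /=; rewrite in_itv/= => /andP[m_le_x x_le_v].
  rewrite lee_fin ler_pM ?le_min ?powR_ge0 ?expR_ge0 ?powR_ge_min ?m_le_x //.
  by rewrite ler_expR lerN2.
apply: fine_gt0; apply/andP; split.
  apply: lt_le_trans (le_trans cst_mv sub_mv).
  by rewrite lte_fin mulr_gt0 // subr_gt0.
by have /fin_numPlt/andP[_ ->] :=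
  @integrable_fin_num _ _ _ lebesgue_measure _ (measurable_itv _) _ int_uv.
Qed.

Lemma upper_gamma_split (a z1 z2 : R) : 0 < a -> 0 <= z1 <= z2 ->
  upper_gamma a z1 = \int[mu]_(w in `[z1, z2]) gamma_integrand a w + upper_gamma a z2.
Proof.
move=> a_gt0 /andP[z1_ge0 z1_le_z2].
have int_z1 := integrable_gamma_integrand _ _ a_gt0 z1_ge0.
have int_z2 : mu.-integrable `]z2, +oo[ (EFin \o gamma_integrand a).
  apply: (@integrableS _ _ _ lebesgue_measure `[z1, +oo[) => //.
  by apply: subset_itvr; rewrite bnd_simp.
rewrite !upper_gammaE -(Rintegral_itv_obnd_cbnd int_z2).
rewrite -(Rintegral_itvB int_z1) ?bnd_simp //.
by rewrite addrC subrK.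
Qed.

Lemma upper_gamma_gt0 (a z : R) : 0 < a -> 0 <= z -> 0 < upper_gamma a z.
Proof.
move=> a_gt0 z_ge0.
have z_le : 0 <= z <= z + 1 by apply/andP; split; lra.
have z_lt : 0 <= z < z + 1 by apply/andP; split; lra.
rewrite (upper_gamma_split _ _ _ a_gt0 z_le) ltr_pwDl ?integral_gamma_integrand_gt0 //.
by rewrite upper_gammaE; apply: Rintegral_ge0 => w _; exact: gamma_integrand_ge0.
Qed.

Lemma upper_gamma_decreasing (a : R) : 0 < a ->
  {in Num.nneg &, {homo upper_gamma a : z1 z2 /~ z1 < z2}}.
Proof.
move=> a_gt0 z1 z2; rewrite !nnegrE => _ z2_ge0 z2_lt_z1.
have z21_le : 0 <= z2 <= z1 by rewrite z2_ge0 ltW.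
have z21_lt : 0 <= z2 < z1 by rewrite z2_ge0.
by rewrite (upper_gamma_split _ _ _ a_gt0 z21_le) ltrDr integral_gamma_integrand_gt0.
Qed.

Lemma upper_gamma_inj (a : R) : 0 < a -> {in Num.nneg &, injective (upper_gamma a)}.
Proof. by move=> a_gt0; apply/dec_inj_in/le_nmono_in/upper_gamma_decreasing. Qed.

Lemma upper_gamma_invK (a z : R) : 0 < a -> 0 <= z ->
  upper_gamma_inv a (upper_gamma a z) = z.
Proof.
move=> a_gt0 z_ge0; apply: xget_unique => [//|y [y_ge0]].
by move/upper_gamma_inj; apply; rewrite ?nnegrE.
Qed.

End upper_gamma.

Section change_of_variable.
Context {R : realType}.
Local Notation mu := (@lebesgue_measure R).

Lemma continuous_gamma_integrand_powR (a q t : R) : 0 < t ->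
  {for t, continuous (fun t => gamma_integrand a (t `^ q) * (q * t `^ (q - 1)))}.
Proof.
move=> t_gt0.
apply: (@continuousM R R (fun t => gamma_integrand a (t `^ q))
  (fun t => q * t `^ (q - 1))).
  apply: (@continuous_comp _ _ _ (@powR R ^~ q) (gamma_integrand a)).
    exact: continuous_powR.
  exact/continuous_gamma_integrand/powR_gt0.
apply: (@continuousM R R (fun=> q) (fun y => y `^ (q - 1)) t); first exact: cvg_cst.
exact: continuous_powR.
Qed.

Lemma integral_gamma_integrand_powR (a q u v : R) : 0 < q -> 0 < u -> u <= v ->
  \int[mu]_(w in `[u `^ q, v `^ q]) gamma_integrand a w =
  \int[mu]_(t in `[u, v]) (gamma_integrand a (t `^ q) * (q * t `^ (q - 1))).
Proof.
move=> q_gt0 u_gt0 u_le_v.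
have gt_u_gt0 x : u <= x -> 0 < x := lt_le_trans u_gt0.
rewrite /Rintegral (@integration_by_substitution_increasing R (@powR R ^~ q)
  (gamma_integrand a) u v u_le_v).
- congr fine; apply: eq_integral => t; rewrite inE/= in_itv/= => /andP[u_le_t _].
  by rewrite !fctE /= powR_derive1 // in_itv/= andbT gt_u_gt0.
- move=> x y; rewrite !in_itv/= => /andP[u_le_x _] /andP[u_le_y _] x_lt_y.
  by apply: gt0_ltr_powR => //; rewrite nnegrE ltW ?gt_u_gt0.
- move=> x; rewrite in_itv/= => /andP[u_lt_x _].
  exact/continuous_derive1_powR/gt_u_gt0/ltW.
- by apply/cvg_ex; eexists; apply/cvg_at_right_filter/continuous_derive1_powR.
- apply/cvg_ex; eexists; apply/cvg_at_left_filter/continuous_derive1_powR.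
  exact: gt_u_gt0.
- split.
  + move=> x; rewrite in_itv/= => /andP[u_lt_x _]; apply: derivable_powR.
    by rewrite in_itv/= andbT gt_u_gt0 // ltW.
  + exact/cvg_at_right_filter/continuous_powR.
  + exact/cvg_at_left_filter/continuous_powR/gt_u_gt0.
- apply: continuous_in_subspaceT => x; rewrite inE/= in_itv/= => /andP[uq_le_x _].
  by apply: continuous_gamma_integrand; exact: lt_le_trans (powR_gt0 _ u_gt0) uq_le_x.
Qed.

End change_of_variable.

Section up_transform_g_p1.
Context {R : realType}.
Local Notation mu := (@lebesgue_measure R).

Lemma gamma_exponent_gt0 (alpha q : R) : alpha < 1 \/ 2 < alpha -> 0 < q ->
  0 < (alpha - 1) / ((alpha - 2) * q).
Proof.
move=> alpha_out q_gt0; rewrite invfM mulrA divr_gt0 //.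
case: alpha_out => [alpha_lt1|alpha_gt2]; last by rewrite divr_gt0 //; lra.
by rewrite nmulr_rgt0 ?invr_lt0; lra.
Qed.

Lemma chvar_integrand_g_p1 (p alpha v : R) : 0 < pstar p -> alpha != 2 -> 0 < v ->
  `|(alpha - 2) * v| `^ (1 / (alpha - 2)) * g_p1 p v =
  a_p1 p / pstar p * `|alpha - 2| `^ (1 / (alpha - 2)) *
  (gamma_integrand ((alpha - 1) / ((alpha - 2) * pstar p)) (v `^ pstar p) *
   (pstar p * v `^ (pstar p - 1))).
Proof.
move=> q_gt0 alpha_neq2 v_gt0.
have alpha2_neq0 : alpha - 2 != 0 by rewrite subr_eq0.
rewrite /g_p1 /gamma_integrand normrM (gtr0_norm v_gt0).
rewrite powRM ?normr_ge0 ?(ltW v_gt0) // -powRrM.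
have <- : v `^ (pstar p * ((alpha - 1) / ((alpha - 2) * pstar p) - 1)) *
    v `^ (pstar p - 1) = v `^ (1 / (alpha - 2)).
  rewrite -powRD ?(gt_eqF v_gt0) ?implybT //.
  by congr powR; field; rewrite alpha2_neq0 gt_eqF.
by field; rewrite gt_eqF.
Qed.

Lemma integral_chvar_integrand_g_p1 (p alpha u v : R) :
  0 < pstar p -> alpha != 2 -> 0 < (alpha - 1) / ((alpha - 2) * pstar p) ->
  0 < u -> u <= v ->
  \int[mu]_(t in `[u, v]) (`|(alpha - 2) * t| `^ (1 / (alpha - 2)) * g_p1 p t) =
  a_p1 p / pstar p * `|alpha - 2| `^ (1 / (alpha - 2)) *
  (upper_gamma ((alpha - 1) / ((alpha - 2) * pstar p)) (u `^ pstar p) -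
   upper_gamma ((alpha - 1) / ((alpha - 2) * pstar p)) (v `^ pstar p)).
Proof.
move=> q_gt0 alpha_neq2 a_gt0 u_gt0 u_le_v.
have uq_le_vq : 0 <= u `^ pstar p <= v `^ pstar p.
  rewrite powR_ge0 /=; apply: ge0_ler_powR => //; rewrite ?nnegrE ltW //.
  exact: lt_le_trans u_gt0 u_le_v.
rewrite (@eq_Rintegral _ _ _ lebesgue_measure _
  (fun t => a_p1 p / pstar p * `|alpha - 2| `^ (1 / (alpha - 2)) *
    (gamma_integrand ((alpha - 1) / ((alpha - 2) * pstar p)) (t `^ pstar p) *
     (pstar p * t `^ (pstar p - 1))))); last first.
  move=> t; rewrite inE/= in_itv/= => /andP[u_le_t _].
  exact/chvar_integrand_g_p1/(lt_le_trans u_gt0).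
rewrite RintegralZl //; last first.
  apply: continuous_compact_integrable; first exact: segment_compact.
  apply: continuous_in_subspaceT => t; rewrite inE/= in_itv/= => /andP[u_le_t _].
  exact/continuous_gamma_integrand_powR/(lt_le_trans u_gt0).
rewrite -integral_gamma_integrand_powR //.
by rewrite (upper_gamma_split _ _ _ a_gt0 uq_le_vq) addrK.
Qed.

Lemma chvar_g_p1 (p alpha x0 x : R) :
  0 < pstar p -> alpha != 2 -> 0 < (alpha - 1) / ((alpha - 2) * pstar p) ->
  0 < x0 -> 0 < x ->
  chvar alpha (g_p1 p) x0 x =
  a_p1 p / pstar p * `|alpha - 2| `^ (1 / (alpha - 2)) *
  (upper_gamma ((alpha - 1) / ((alpha - 2) * pstar p)) (x `^ pstar p) -
   upper_gamma ((alpha - 1) / ((alpha - 2) * pstar p)) (x0 `^ pstar p)).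
Proof.
move=> q_gt0 alpha_neq2 a_gt0 x0_gt0 x_gt0; rewrite /chvar /oint.
case: ifPn => [x_le_x0|]; first exact: integral_chvar_integrand_g_p1.
rewrite -ltNge => /ltW x0_le_x.
by rewrite integral_chvar_integrand_g_p1 // -mulrN opprB.
Qed.

Lemma up_transform_chvar (alpha x0 x : R) (f : R -> R) :
  {in `]0, +oo[ &, injective (chvar alpha f x0)} -> 0 < x ->
  up_transform alpha f x0 (chvar alpha f x0 x) =
  `|(alpha - 2) * x| `^ (1 / (2 - alpha)).
Proof.
move=> chvar_inj x_gt0; rewrite /up_transform.
congr (`|_ * _| `^ _); apply: xget_unique => [//|y [y_gt0 /chvar_inj]].
by apply; rewrite in_itv/= andbT.
Qed.

End up_transform_g_p1.

Theorem proposition11 (R : realType) (p alpha x0 : R)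
  (hp : 0 < pstar p) (halpha : alpha < 1 \/ 2 < alpha) (hx0 : 0 < x0)
  (s : R) (hs : exists2 x : R, 0 < x & chvar alpha (g_p1 p) x0 x = s) :
  let a := (alpha - 1) / ((alpha - 2) * pstar p) in
  let K := a_p1 p / pstar p * `|alpha - 2| `^ (1 / (alpha - 2)) in
  let s0 := K * upper_gamma a (x0 `^ pstar p) in
  up_transform alpha (g_p1 p) x0 s =
    `|alpha - 2| `^ (1 / (2 - alpha)) *
    `|upper_gamma_inv a ((s + s0) / K)| `^ (1 / (pstar p * (2 - alpha))).
Proof.
move=> a K s0.
have alpha_neq2 : alpha != 2 by apply/eqP => alpha2; case: halpha; rewrite alpha2; lra.
have a_gt0 : 0 < a by exact: gamma_exponent_gt0.
have K_gt0 : 0 < K.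
  rewrite /K mulr_gt0 ?powR_gt0 ?normr_gt0 ?subr_eq0 // divr_gt0 //.
  rewrite /a_p1 divr_gt0 // mulr_gt0 // /Gamma upper_gamma_gt0 //.
  by rewrite div1r invr_gt0.
have chvarE y : 0 < y -> chvar alpha (g_p1 p) x0 y =
    K * (upper_gamma a (y `^ pstar p) - upper_gamma a (x0 `^ pstar p)).
  exact: chvar_g_p1.
have chvar_inj : {in `]0, +oo[ &, injective (chvar alpha (g_p1 p) x0)}.
  move=> y z; rewrite !in_itv/= !andbT => y_gt0 z_gt0.
  rewrite !chvarE // => /(mulfI (negbT (gt_eqF K_gt0)))/addIr.
  move=> /upper_gamma_inj; rewrite !nnegrE !powR_ge0 => /(_ a_gt0 isT isT).
  by apply: powR_injective; rewrite // nnegrE ltW.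
case: hs => x x_gt0 <-.
rewrite up_transform_chvar // chvarE // /s0 -mulrDr subrK.
rewrite mulrAC divff ?gt_eqF // (mul1r (upper_gamma _ _)).
rewrite upper_gamma_invK ?powR_ge0 // (ger0_norm (powR_ge0 _ _)) -powRrM.
rewrite normrM (gtr0_norm x_gt0) powRM ?normr_ge0 ?(ltW x_gt0) //.
congr (_ * x `^ _); field.
by rewrite subr_eq0 eq_sym alpha_neq2 gt_eqF.
Qed.
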